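(* Let $T$ be an SSYT of skew shape. (a) If $S$ is the result of a row insertion $T\leftarrow k$ (external, or internal from some row) for some positive integer $k$, then the reverse row insertion $S\rightarrow c$ results in $T$, where $c$ is the unique cell that is non-empty in $S$ but empty in $T$. (b) If $S$ is the result of $T\rightarrow c$ for some outside corner $c$ of $T$, and the final entry $k$ of $T\rightarrow c$ lands in row $r\ge0$, then $S\leftarrow_r k$ results in $T$.
   Context: Diagrams are in French notation (rows numbered from the bottom starting at 1; a partition $\lambda$ consists of the cells in column $i$, row $j$ with $1\le i\le\lambda_j$; $\lambda/\mu$ is the set difference). An SSYT of skew shape has positive integer entries weakly increasing left to right in rows and strictly increasing bottom to top in columns. An inside corner of $T$ is a cell with no cell of $T$ immediately below or left of it; an outside corner is a cell with no cell of $T$ immediately above or right of it. Row insertion: to insert $x$ starting at row $j$: if $x$ is weakly larger than all entries of row $j$ (or row $j$ is empty), put $x$ in a new cell at the right end of row $j$ (if the row is empty and the shape is $\alpha/\beta$, in column $\alpha_j+1$) and stop; otherwise replace the entry $y$ of the leftmost cell of row $j$ with entry $>x$ by $x$ and insert $y$ starting at row $j+1$. External insertion $T\leftarrow_0 k$ inserts $k$ starting at row 1. If $T$ has an inside corner in row $r\ge1$ with entry $k$, internal insertion $T\leftarrow_r k$ removes that cell and inserts $k$ starting at row $r+1$. Reverse row insertion $T\rightarrow c$, $c$ an outside corner in row $j$ with entry $k$: delete $c$ and reverse-insert $x=k$ into row $j-1$: if that row index is 0, stop ($x$ lands in row 0); else if $x$ is weakly smaller than all entries of that row $r$, place $x$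 in a new cell immediately left of the leftmost cell of row $r$ and stop ($x$ lands in row $r$); else replace the entry $y$ of the rightmost cell of row $r$ with entry $<x$ by $x$ and reverse-insert $y$ into row $r-1$. The value $x$ at termination is the final entry. *)

From mathcomp Require Import all_boot.
Set Implicit Arguments. Unset Strict Implicit. Unset Printing Implicit Defensive.

(* Rows are numbered from 1 (bottom).
   [tb_in] lists beta_1, beta_2, ... and [tb_rows] lists the entries of
   rows 1, 2, ... from left to right (missing items = 0 / empty row).
   Row j occupies the columns beta_j + 1 .. alpha_j, where
   alpha_j = beta_j + size (row j).  The shape alpha/beta is part of the data
   (needed e.g. for insertion into an empty row). *)
Record sktab := SkTab { tb_in : seq nat ; tb_rows : seq (seq nat) }.

Definition inner (T : sktab) (j : nat) : nat := nth 0 (tb_in T) j.-1.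
Definition row (T : sktab) (j : nat) : seq nat := nth [::] (tb_rows T) j.-1.
Definition outer (T : sktab) (j : nat) : nat := inner T j + size (row T j).

(* cells are pairs (column i, row j) *)
Definition is_cell (T : sktab) (c : nat * nat) : Prop :=
  1 <= c.2 /\ inner T c.2 < c.1 <= outer T c.2.

Definition entry (T : sktab) (c : nat * nat) : nat :=
  nth 0 (row T c.2) (c.1 - inner T c.2).-1.

Definition is_skew (T : sktab) : Prop :=
  forall j, 1 <= j -> inner T j.+1 <= inner T j /\ outer T j.+1 <= outer T j.

Definition is_ssyt (T : sktab) : Prop :=
  [/\ forall c, is_cell T c -> 0 < entry T c,
      forall i j, is_cell T (i, j) -> is_cell T (i.+1, j) ->
                  entry T (i, j) <= entry T (i.+1, j)
    & forall i j, is_cell T (i, j) -> is_cell T (i, j.+1) ->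
                  entry T (i, j) < entry T (i, j.+1)].

Definition inside_corner (T : sktab) (c : nat * nat) : Prop :=
  [/\ is_cell T c, ~ is_cell T (c.1, c.2.-1) & ~ is_cell T (c.1.-1, c.2)].

Definition outside_corner (T : sktab) (c : nat * nat) : Prop :=
  [/\ is_cell T c, ~ is_cell T (c.1, c.2.+1) & ~ is_cell T (c.1.+1, c.2)].

Definition teq (T S : sktab) : Prop :=
  forall j, 1 <= j -> inner T j = inner S j /\ row T j = row S j.

Definition set_row (T : sktab) (j : nat) (s : seq nat) : sktab :=
  SkTab (tb_in T) (set_nth [::] (tb_rows T) j.-1 s).
Definition set_inner (T : sktab) (j : nat) (b : nat) : sktab :=
  SkTab (set_nth 0 (tb_in T) j.-1 b) (tb_rows T).

(* Row insertion of x starting at row j (fuel bounds the number of rows;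
   the fuel used below is always sufficient). *)
Fixpoint ins_fuel (n : nat) (T : sktab) (j x : nat) : sktab :=
  match n with
  | 0 => T
  | n'.+1 =>
    let s := row T j in
    if all (fun y => y <= x) s then set_row T j (rcons s x)
    else
      let p := find (fun y => x < y) s in
      ins_fuel n' (set_row T j (set_nth 0 s p x)) j.+1 (nth 0 s p)
  end.

Definition ins_from (T : sktab) (j x : nat) : sktab :=
  ins_fuel (size (tb_rows T)).+2 T j x.

Definition ext_ins (T : sktab) (k : nat) : sktab := ins_from T 1 k.

(* internal insertion T <-_r k (r >= 1): remove the inside corner of row r,
   i.e. its leftmost cell, and insert k starting at row r+1. *)
Definition int_ins (T : sktab) (r k : nat) : sktab :=
  ins_from (set_inner (set_row T r (behead (row T r))) r (inner T r).+1) r.+1 k.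

(* Reverse insertion of x into row r, downwards.  Returns
   (tableau, final entry, row in which it lands). *)
Fixpoint rev_fuel (n : nat) (T : sktab) (r x : nat) : sktab * nat * nat :=
  match n with
  | 0 => (T, x, r)
  | n'.+1 =>
    if r == 0 then (T, x, 0) else
    let s := row T r in
    if all (fun y => x <= y) s then
      (set_inner (set_row T r (x :: s)) r (inner T r).-1, x, r)
    else
      let p := (size s).-1 - find (fun y => y < x) (rev s) in
      rev_fuel n' (set_row T r (set_nth 0 s p x)) r.-1 (nth 0 s p)
  end.

(* Reverse row insertion T -> c for an outside corner c = (i, j): delete c
   (the last cell of row j) and reverse-insert its entry into row j-1. *)
Definition revins (T : sktab) (c : nat * nat) : sktab * nat * nat :=
  let s := row T c.2 in
  rev_fuel c.2.+1 (set_row T c.2 (take (size s).-1 s)) c.2.-1 (entry T c).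

From mathcomp Require Import all_boot zify.
Set Implicit Arguments. Unset Strict Implicit. Unset Printing Implicit Defensive.

(* A bumping step in a sorted row (x replaces the leftmost entry y > x) and a
   reverse bumping step (y replaces the rightmost entry < y) undo each other
   at the same position.  Hence forward and reverse insertion follow the same
   path of cells in opposite directions, and only the ends of the path need
   an argument.  The cell created by forward insertion is the only new cell
   and is an outside corner because the outer shape is a partition.  When
   reverse insertion stops in a row r >= 1, column strictness leaves a free
   cell left of row r, which becomes an inside corner holding the final
   entry; internal insertion from row r picks it up again. *)

Lemma row_set_row T j s j' : 1 <= j -> 1 <= j' ->
  row (set_row T j s) j' = if j' == j then s else row T j'.
Proof.
move=> hj hj'; rewrite /row /set_row /= nth_set_nth /=.
by case: j hj j' hj' => // j _ [] // j' _ /=; rewrite eqSS.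
Qed.

Lemma inner_set_inner T j b j' : 1 <= j -> 1 <= j' ->
  inner (set_inner T j b) j' = if j' == j then b else inner T j'.
Proof.
move=> hj hj'; rewrite /inner /set_inner /= nth_set_nth /=.
by case: j hj j' hj' => // j _ [] // j' _ /=; rewrite eqSS.
Qed.

Lemma row_set_inner T j b j' : row (set_inner T j b) j' = row T j'.
Proof. by []. Qed.

Lemma inner_set_row T j s j' : inner (set_row T j s) j' = inner T j'.
Proof. by []. Qed.

Lemma row_neq_nil_lt T j : row T j != [::] -> j.-1 < size (tb_rows T).
Proof. by rewrite /row; case: ltnP => // H; rewrite nth_default. Qed.

Lemma teq_rows T U :
  tb_in U = tb_in T -> (forall j, 1 <= j -> row U j = row T j) -> teq U T.
Proof. by move=> Hi Hr j hj; rewrite /inner Hi Hr. Qed.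

Lemma ssyt_row_sorted T : is_ssyt T -> forall j, 1 <= j -> sorted leq (row T j).
Proof.
case=> _ Hrw _ j hj; apply/(sortedP 0) => i hi.
have := Hrw (inner T j + i.+1) j.
rewrite /is_cell /entry /outer /= -addnS !addKn /=.
by apply; lia.
Qed.

Lemma ins_fuelS n T j x : ins_fuel n.+1 T j x =
  let s := row T j in
  if all (fun y => y <= x) s then set_row T j (rcons s x)
  else let p := find (fun y => x < y) s in
       ins_fuel n (set_row T j (set_nth 0 s p x)) j.+1 (nth 0 s p).
Proof. by []. Qed.

Lemma rev_fuelS n T r x : rev_fuel n.+1 T r x =
  if r == 0 then (T, x, 0) else
  let s := row T r in
  if all (fun y => x <= y) s then
    (set_inner (set_row T r (x :: s)) r (inner T r).-1, x, r)
  else let p := (size s).-1 - find (fun y => y < x) (rev s) in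
       rev_fuel n (set_row T r (set_nth 0 s p x)) r.-1 (nth 0 s p).
Proof. by []. Qed.

Lemma find_first (a : pred nat) s p :
  (forall i, i < p -> ~~ a (nth 0 s i)) -> p < size s -> a (nth 0 s p) ->
  find a s = p.
Proof.
elim: s p => [|h t IH] [|p] //= Hb Hp Ha; first by rewrite Ha.
rewrite (negbTE (Hb 0 isT)); congr _.+1; apply: IH => // i Hi.
exact: (Hb i.+1).
Qed.

Lemma set_nth_restore (s : seq nat) p x :
  p < size s -> set_nth 0 (set_nth 0 s p x) p (nth 0 s p) = s.
Proof.
move=> Hp; rewrite set_set_nth eqxx; apply: (@eq_from_nth _ 0).
  by rewrite size_set_nth; lia.
by move=> i _; rewrite nth_set_nth /=; case: eqP => // ->.
Qed.

Lemma sorted_nth_leq s i j :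
  sorted leq s -> i <= j -> j < size s -> nth 0 s i <= nth 0 s j.
Proof.
by move=> Hs Hij Hj; apply: (sorted_leq_nth leq_trans leqnn) => //; rewrite inE; lia.
Qed.

Lemma bump_unbump s x : sorted leq s -> ~~ all (fun y => y <= x) s ->
  let p := find (fun y => x < y) s in let y := nth 0 s p in
  let s' := set_nth 0 s p x in
  [/\ p < size s, ~~ all (fun z => y <= z) s',
      (size s').-1 - find (fun z => z < y) (rev s') = p,
      nth 0 s' p = x & set_nth 0 s' p y = s].
Proof.
move=> Hs Hall p y s'.
have Hhas : has (fun y => x < y) s.
  by rewrite -has_predC in Hall; apply: sub_has Hall => z /=; rewrite -ltnNge.
have Hp : p < size s by rewrite -has_find.
have Hsz : size s' = size s by rewrite size_set_nth; lia.
have Hn : nth 0 s' p = x by rewrite nth_set_nth /= eqxx.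
split; rewrite ?set_nth_restore //.
- apply/allPn; exists x; last by rewrite -ltnNge; apply: nth_find.
  by rewrite -Hn mem_nth // Hsz.
rewrite (@find_first _ _ (size s - p.+1)) ?size_rev ?Hsz; first lia.
- move=> i Hi; rewrite nth_rev Hsz; last lia.
  rewrite nth_set_nth /=; case: eqP => [?|_]; first lia.
  by rewrite -leqNgt; apply: sorted_nth_leq => //; lia.
- lia.
rewrite nth_rev Hsz; last lia.
have -> : size s - (size s - p.+1).+1 = p by lia.
by rewrite Hn; apply: nth_find.
Qed.

Lemma unbump_bump s x : sorted leq s -> ~~ all (fun y => x <= y) s ->
  let p := (size s).-1 - find (fun y => y < x) (rev s) in let y := nth 0 s p in
  let s' := set_nth 0 s p x in
  [/\ p < size s, ~~ all (fun z => z <= y) s',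
      find (fun z => y < z) s' = p, nth 0 s' p = x & set_nth 0 s' p y = s].
Proof.
move=> Hs Hall p y s'.
have Hhas : has (fun y => y < x) (rev s).
  by rewrite has_rev -has_predC in Hall *; apply: sub_has Hall => z /=; rewrite -ltnNge.
pose t := find (fun y => y < x) (rev s).
have Ht : t < size s by rewrite -(size_rev s) -has_find.
have Hpt : p = size s - t.+1 by rewrite /p -/t; lia.
have Hp : p < size s by lia.
have Hyx : y < x by rewrite /y Hpt -nth_rev //; apply: (nth_find 0 Hhas).
have Hsz : size s' = size s by rewrite size_set_nth; lia.
have Hn : nth 0 s' p = x by rewrite nth_set_nth /= eqxx.
split; rewrite ?set_nth_restore //.
- apply/allPn; exists x; last by rewrite -ltnNge.
  by rewrite -Hn mem_nth // Hsz.
apply: find_first; rewrite ?Hsz ?Hn //.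
move=> i Hi; rewrite nth_set_nth /=; case: eqP => [?|_]; first lia.
by rewrite -leqNgt; apply: sorted_nth_leq => //; lia.
Qed.

(* The bumping path from row [j] ends with a new cell in row [m] holding [v];
   reverse insertion of [v] from row [m - 1] walks the path back down on any
   tableau agreeing with the result on rows [j .. m - 1]. *)
Lemma ins_fuel_retrace n T j x S :
  1 <= j -> j <= (size (tb_rows T)).+1 -> (size (tb_rows T)).+1 < j + n ->
  (forall j', j <= j' -> sorted leq (row T j')) ->
  S = ins_fuel n T j x ->
  exists m v, [/\ j <= m, tb_in S = tb_in T,
    row S m = rcons (row T m) v,
    forall j', 1 <= j' -> j' != m -> size (row S j') = size (row T j') &
    (forall j', 1 <= j' -> (j' < j) || (m < j') -> row S j' = row T j') /\
    forall U f, m - j < f -> (forall j', j <= j' < m -> row U j' = row S j') ->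
     exists U', rev_fuel f U m.-1 v = rev_fuel (f - (m - j)) U' j.-1 x /\
       tb_in U' = tb_in U /\
       forall j', 1 <= j' ->
         row U' j' = if (j <= j') && (j' < m) then row T j' else row U j'].
Proof.
elim: n T j x S => [|n IH] T j x S hj hjs hn hsort ->; first lia.
rewrite ins_fuelS /=.
case Hall: (all (fun y => y <= x) (row T j)).
  exists j, x; split; rewrite ?row_set_row ?eqxx //.
  - by move=> j' hj' /negbTE hne; rewrite row_set_row // hne.
  split=> [j' hj' H|U f _ _]; first by rewrite row_set_row //; case: eqP => // ?; lia.
  exists U; rewrite subnn subn0; do 2!split => //.
  by move=> j' _; case: ifP => //; lia.
have [Hp Hnall Hrev Hn Hset] := bump_unbump (hsort j (leqnn j)) (negbT Hall).
set s := row T j in Hp Hnall Hrev Hn Hset Hall *.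
set p := find _ s in Hp Hnall Hrev Hn Hset *.
set y := nth 0 s p in Hnall Hrev Hn Hset *.
set s' := set_nth 0 s p x in Hnall Hrev Hn Hset *.
have Hjs : j.-1 < size (tb_rows T).
  by apply: row_neq_nil_lt; apply/eqP => E; rewrite /s E in Hall.
set T1 := set_row T j s'.
have HT1 j' : 1 <= j' -> j' != j -> row T1 j' = row T j'.
  by move=> hj' /negbTE hne; rewrite /T1 row_set_row // hne.
have HT1s : size (tb_rows T1) = size (tb_rows T) by rewrite /= size_set_nth; lia.
have Hsort1 j' : j.+1 <= j' -> sorted leq (row T1 j').
  by move=> hj'; rewrite HT1; [apply: hsort| |apply/eqP]; lia.
have [m [v [Hm Hin Hrow Hsz [Hrows Hretrace]]]] :=
  IH T1 j.+1 y _ isT ltac:(lia) ltac:(lia) Hsort1 erefl.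
exists m, v; split; [lia | exact: Hin | | | ].
- by rewrite Hrow HT1 //; apply/eqP; lia.
- move=> j' hj' hne; rewrite Hsz // /T1 row_set_row //; case: eqP => // ->.
  by rewrite size_set_nth -/s; lia.
split=> [j' hj' H|U f Hf HU].
  by rewrite Hrows; [apply: HT1 => //; apply/eqP| |]; lia.
have [U1 [-> [Hin1 HU1]]] := Hretrace U f ltac:(lia) ltac:(move=> j' hj'; apply: HU; lia).
have -> : f - (m - j.+1) = (f - (m - j)).+1 by lia.
rewrite rev_fuelS /=.
have -> : (j == 0) = false by lia.
have HU1j : row U1 j = s'.
  rewrite HU1 //; have -> : (j.+1 <= j) && (j < m) = false by lia.
  by rewrite HU ?Hrows ?row_set_row ?eqxx //; lia.
rewrite HU1j (negbTE Hnall) Hrev Hn Hset.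
exists (set_row U1 j s); do 2!split => //.
move=> j' hj'; rewrite row_set_row //; case: eqP => [->|hne].
  by have -> : (j <= j) && (j < m) by lia.
rewrite HU1 //; case: ifP => H1.
  have -> : (j <= j') && (j' < m) by lia.
  by apply: HT1 => //; apply/eqP.
by have -> : (j <= j') && (j' < m) = false by lia.
Qed.

Lemma ins_from_outside_corner T j x :
  1 <= j -> j <= (size (tb_rows T)).+1 ->
  (forall j', j <= j' -> sorted leq (row T j')) ->
  (forall j', 1 <= j' -> outer T j'.+1 <= outer T j') ->
  let S := ins_from T j x in
  exists m, [/\ j <= m, outer S m = (outer T m).+1,
    forall d, is_cell S d -> is_cell T d \/ d = (outer S m, m),
    outside_corner S (outer S m, m) &
    exists U, [/\ tb_in U = tb_in T, forall j', 1 <= j' -> row U j' = row T j'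
      & revins S (outer S m, m) = rev_fuel j.+1 U j.-1 x]].
Proof.
move=> hj hjs hsort hout S.
have [m [v [Hm Hin Hrow Hsz [Hrows Hretrace]]]] :=
  @ins_fuel_retrace (size (tb_rows T)).+2 T j x S hj hjs ltac:(lia) hsort erefl.
have Hinn j' : inner S j' = inner T j' by rewrite /inner Hin.
have Hout j' : 1 <= j' -> j' != m -> outer S j' = outer T j'.
  by move=> h1 h2; rewrite /outer Hinn Hsz.
have Houtm : outer S m = (outer T m).+1 by rewrite /outer Hinn Hrow size_rcons addnS.
have hm1 : 1 <= m by lia.
exists m; split => //.
- case=> a b; rewrite /is_cell /= Hinn => -[hb hab].
  case: (eqVneq b m) hab => [->|hbm] hab; last by left; rewrite Hout in hab.
  have [ha|->]: a <= outer T m \/ a = outer S m by lia.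
  + by left; lia.
  + by right.
- split; rewrite /is_cell /= ?Houtm ?Hinn /outer; try lia.
  rewrite -/(outer S m.+1) -/(outer T m) Hout //; last by apply/eqP; lia.
  by have := hout m hm1; lia.
have HSm j' : j <= j' < m -> row (set_row S m (row T m)) j' = row S j'.
  by move=> hj'; rewrite row_set_row; [case: eqP => // ?| |]; lia.
have [U [EU [HinU HrowU]]] := Hretrace _ m.+1 (leq_subr j m) HSm.
exists U; split.
- by rewrite HinU /= Hin.
- move=> j' hj'; rewrite HrowU //; case: ifP => // H.
  rewrite row_set_row //; case: eqP => [->//|hne].
  rewrite Hrows //; apply/orP; move/negbT: H; rewrite negb_and -!ltnNge.
  by move/eqP: hne; lia.
have Hv : entry S (outer S m, m) = v.
  by rewrite /entry /= /outer Hrow size_rcons addKn /= -cats1 nth_cat ltnn subnn.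
rewrite /revins Hv Hrow size_rcons succnK -cats1 take_size_cat //.
change (rev_fuel m.+1 (set_row S m (row T m)) m.-1 v = rev_fuel j.+1 U j.-1 x).
by rewrite EU; congr rev_fuel; lia.
Qed.

Definition remove_first_cell (T : sktab) (r : nat) : sktab :=
  set_inner (set_row T r (behead (row T r))) r (inner T r).+1.

Lemma row_remove_first_cell T r j : 1 <= r -> 1 <= j ->
  row (remove_first_cell T r) j = if j == r then behead (row T r) else row T j.
Proof. by move=> hr hj; rewrite row_set_inner row_set_row. Qed.

Lemma inner_remove_first_cell T r j : 1 <= r -> 1 <= j ->
  inner (remove_first_cell T r) j = if j == r then (inner T r).+1 else inner T j.
Proof. by move=> hr hj; rewrite inner_set_inner. Qed.

Lemma outer_remove_first_cell T r j : 1 <= r -> 1 <= j -> row T r != [::] ->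
  outer (remove_first_cell T r) j = outer T j.
Proof.
move=> hr hj hne; rewrite /outer row_remove_first_cell // inner_remove_first_cell //.
by case: eqP => [->|//]; move: hne; case: (row T r) => //= *; lia.
Qed.

Lemma inside_corner_row T i r : inside_corner T (i, r) ->
  row T r = entry T (i, r) :: behead (row T r).
Proof.
rewrite /inside_corner /is_cell /entry /= => -[[hr hi] _ hleft].
have Hi : i = (inner T r).+1 by lia.
move: hi; rewrite Hi subSn // subnn /outer.
by case: (row T r) => //= *; lia.
Qed.

Definition reverts_to (S T : sktab) : Prop :=
  exists c, [/\ is_cell S c, ~ is_cell T c,
                (forall d, is_cell S d -> ~ is_cell T d -> d = c),
                outside_corner S c
              & teq (revins S c).1.1 T].

Lemma outer_skew T : is_skew T -> forall j, 1 <= j -> outer T j.+1 <= outer T j.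
Proof. by move=> HT j hj; case: (HT j hj). Qed.

Lemma ext_ins_reverts T k : is_skew T -> is_ssyt T -> reverts_to (ext_ins T k) T.
Proof.
move=> HT Hs; set S := ext_ins T k.
have [m [_ Houtm Hnew Hcorner [U [HinU HrowU Hrev]]]] :=
  @ins_from_outside_corner T 1 k isT ltac:(lia)
    (fun j hj => ssyt_row_sorted Hs hj) (outer_skew HT).
exists (outer S m, m); split => //.
- by case: Hcorner.
- by rewrite /is_cell Houtm /=; lia.
- by move=> d hd hnd; case: (Hnew d hd).
- by rewrite Hrev; apply: teq_rows.
Qed.

Lemma int_ins_reverts T r k : is_skew T -> is_ssyt T -> 1 <= r ->
  (exists i, inside_corner T (i, r) /\ entry T (i, r) = k) ->
  reverts_to (int_ins T r k) T.
Proof.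
move=> HT Hs hr [i [/inside_corner_row Hrow <-]].
set T0 := remove_first_cell T r; set S := int_ins T r (entry T (i, r)).
set t := behead (row T r) in Hrow.
have Hne : row T r != [::] by rewrite Hrow.
have HT0o j : 1 <= j -> outer T0 j = outer T j by move=> hj; exact: outer_remove_first_cell.
have HT0r j : 1 <= j -> j != r -> row T0 j = row T j.
  by move=> hj /negbTE hne; rewrite row_remove_first_cell // hne.
have HT0size : r.+1 <= (size (tb_rows T0)).+1.
  by rewrite /= size_set_nth; have := row_neq_nil_lt Hne; lia.
have HT0sorted j : r.+1 <= j -> sorted leq (row T0 j).
  by move=> hj; rewrite HT0r; [apply: (ssyt_row_sorted Hs) | | apply/eqP]; lia.
have HT0skew j : 1 <= j -> outer T0 j.+1 <= outer T0 j.
  by move=> hj; rewrite !HT0o //; exact: outer_skew.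
have [m [Hm Houtm Hnew Hcorner [U [HinU HrowU Hrev]]]] :=
  @ins_from_outside_corner T0 r.+1 (entry T (i, r)) isT HT0size HT0sorted HT0skew.
have HT0T d : is_cell T0 d -> is_cell T d.
  case: d => a b; rewrite /is_cell /= => -[hb]; rewrite HT0o //.
  by rewrite inner_remove_first_cell //; case: eqP => [->|_]; lia.
exists (outer S m, m); split => //.
- by case: Hcorner.
- by rewrite /is_cell Houtm HT0o /=; lia.
- by move=> d hd hnd; case: (Hnew d hd) => // /HT0T /hnd.
rewrite Hrev rev_fuelS /=; have -> : (r == 0) = false by lia.
have HUr : row U r = t by rewrite HrowU // row_remove_first_cell // eqxx.
have Hsorted : sorted leq (entry T (i, r) :: t) by rewrite -Hrow; exact: ssyt_row_sorted.
rewrite HUr (order_path_min leq_trans Hsorted) /=.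
move=> j hj; rewrite inner_set_inner // row_set_inner row_set_row //.
have HinnU j' : inner U j' = inner T0 j' by rewrite /inner HinU.
case: eqP => [->|/eqP hne]; first by rewrite HinnU inner_remove_first_cell // eqxx Hrow.
by rewrite inner_set_row HinnU inner_remove_first_cell // HrowU // (negbTE hne) HT0r.
Qed.

(* If [(q, r)] were a cell, column strictness would put an entry smaller than
   that of [(q, r+1)] into row [r]; so row [r] starts right of column [q]. *)
Lemma inner_gt0_of_min_below T q r :
  is_skew T -> is_ssyt T -> 1 <= r -> is_cell T (q, r.+1) ->
  all (fun y => entry T (q, r.+1) <= y) (row T r) -> 0 < inner T r.
Proof.
move=> HT [_ _ Hcol] hr Hq Hall; move: (Hq); rewrite /is_cell /= => -[_ hq].
case: (ltnP (inner T r) q) => Hqr; last lia.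
have Hc : is_cell T (q, r).
  by rewrite /is_cell /=; have := HT r hr; lia.
have Hin : entry T (q, r) \in row T r.
  by apply: mem_nth; move: Hc; rewrite /is_cell /outer /=; lia.
by have := Hcol q r Hc Hq; have := allP Hall _ Hin; lia.
Qed.

(* Reverse insertion of the entry of [(q, r+1)] from row [r] lands in some row
   [r0 <= r] (row [0] meaning it falls out); forward insertion from row
   [r0 + 1] then retraces the path, restoring rows [r0 + 1 .. r]. *)
Lemma rev_fuel_retrace T n U r x q S k r0 :
  is_skew T -> is_ssyt T -> r < n ->
  (forall j, 1 <= j <= r -> inner U j = inner T j /\ row U j = row T j) ->
  is_cell T (q, r.+1) -> x = entry T (q, r.+1) ->
  rev_fuel n U r x = (S, k, r0) ->
  [/\ r0 <= r, size (tb_rows U) <= size (tb_rows S),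
    forall j, 1 <= j -> (j < r0) || (r < j) -> row S j = row U j,
    forall j, 1 <= j -> j != r0 -> inner S j = inner U j &
    (0 < r0 -> [/\ row S r0 = k :: row U r0, inner S r0 = (inner U r0).-1,
                   0 < inner U r0 & all (fun z => k <= z) (row U r0)]) /\
    forall V g, r - r0 < g -> (forall j, r0 < j <= r -> row V j = row S j) ->
     exists V', ins_fuel g V r0.+1 k = ins_fuel (g - (r - r0)) V' r.+1 x /\
       tb_in V' = tb_in V /\
       forall j, 1 <= j ->
         row V' j = if (r0 < j) && (j <= r) then row U j else row V j].
Proof.
move=> HT Hs; have Hsort := ssyt_row_sorted Hs.
elim: n U r x q S k r0 => [|n IH] U r x q S k r0 hn hU hq hx; first lia.
rewrite rev_fuelS.
case: eqP => [-> [<- <- <-] | /eqP r_neq0].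
  split => //; split => // V g _ _; exists V; rewrite !subn0; do 2!split => //.
  by move=> j _; case: ifP => //; lia.
have hr : 0 < r by rewrite lt0n.
have [hUi hUr] := hU r ltac:(lia).
rewrite /=; case Hall: (all (fun y => x <= y) (row U r)).
  move=> [<- <- <-]; split.
  - by [].
  - by rewrite /= size_set_nth; lia.
  - by move=> j hj H; rewrite row_set_inner row_set_row //; case: (j =P r) => // ?; lia.
  - by move=> j hj /negbTE hne; rewrite inner_set_inner // hne.
  split=> [_|V g _ _].
    rewrite row_set_inner row_set_row // inner_set_inner // eqxx; split => //.
    rewrite hUi; apply: (inner_gt0_of_min_below HT Hs) hq _; first lia.
    by rewrite -hx -hUr.
  exists V; rewrite subnn subn0; do 2!split => //.
  by move=> j _; case: ifP => //; lia.
have Hsr : sorted leq (row U r) by rewrite hUr; apply: Hsort; lia.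
have [Hp Hnall Hfind Hn Hset] := unbump_bump Hsr (negbT Hall).
set s := row U r in Hp Hnall Hfind Hn Hset Hall hUr *.
set p := (size s).-1 - _ in Hp Hnall Hfind Hn Hset *.
set y := nth 0 s p in Hnall Hfind Hn Hset *.
set s' := set_nth 0 s p x in Hnall Hfind Hn Hset *.
set U1 := set_row U r s'.
move=> E.
have HU1 j : 1 <= j -> j != r -> row U1 j = row U j.
  by move=> hj /negbTE hne; rewrite /U1 row_set_row // hne.
have hU1 j : 1 <= j <= r.-1 -> inner U1 j = inner T j /\ row U1 j = row T j.
  by move=> hj; rewrite inner_set_row HU1; [apply: hU| |apply/eqP]; lia.
have hq' : is_cell T (inner T r + p.+1, r.-1.+1).
  by rewrite prednK // /is_cell /outer /= -hUr; lia.
have hy : y = entry T (inner T r + p.+1, r.-1.+1).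
  by rewrite prednK // /entry /= -hUr; congr nth; lia.
have [Hr0 Hsz Hrows Hinn [Hland Hretrace]] := IH U1 r.-1 y _ S k r0 ltac:(lia) hU1 hq' hy E.
split.
- lia.
- by apply: leq_trans Hsz; rewrite /= size_set_nth; lia.
- by move=> j hj H; rewrite Hrows ?HU1 //; [apply/eqP|]; lia.
- by move=> j hj hne; rewrite Hinn.
split=> [r0_gt0|V g Hg HV].
  have [H1 H2 H3 H4] := Hland r0_gt0.
  have HU1r0 : row U1 r0 = row U r0 by rewrite HU1 //; apply/eqP; lia.
  by rewrite H1 H2 -HU1r0.
have [V1 [-> [Hin1 HV1]]] := Hretrace V g ltac:(lia) ltac:(move=> j hj; apply: HV; lia).
rewrite prednK //.
have -> : g - (r.-1 - r0) = (g - (r - r0)).+1 by lia.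
rewrite ins_fuelS /=.
have HV1r : row V1 r = s'.
  rewrite HV1 //; have -> : (r0 < r) && (r <= r.-1) = false by lia.
  by rewrite HV ?Hrows ?row_set_row ?eqxx //; lia.
rewrite HV1r (negbTE Hnall) Hfind Hn Hset.
exists (set_row V1 r s); do 2!split => //.
move=> j hj; rewrite row_set_row //; case: eqP => [->|hne].
  by have -> : (r0 < r) && (r <= r) by lia.
rewrite HV1 //; case: ifP => H1.
  have -> : (r0 < j) && (j <= r) by lia.
  by apply: HU1 => //; apply/eqP.
by have -> : (r0 < j) && (j <= r) = false by lia.
Qed.

Lemma revins_outside_corner T a b : is_ssyt T -> outside_corner T (a, b) ->
  exists s0 z, [/\ row T b = rcons s0 z, all (fun y => y <= z) s0,
    b.-1 < size (tb_rows T), entry T (a, b) = z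
  & revins T (a, b) = rev_fuel b.+1 (set_row T b s0) b.-1 z].
Proof.
move=> Hs [Hc _ Hright]; move: (Hc) Hright; rewrite /is_cell /= => -[hb hab] Hright.
have Ha : a = outer T b by lia.
case/lastP Es: (row T b) => [|s0 z].
  by move: hab; rewrite /outer Es /=; lia.
have Hz : entry T (a, b) = z.
  by rewrite /entry /= Ha /outer addKn Es size_rcons /= nth_rcons ltnn eqxx.
exists s0, z; split => //.
- apply/allP => y /(nthP 0) [i hi <-].
  have Hsb : sorted leq (rcons s0 z) by rewrite -Es; exact: ssyt_row_sorted.
  have := @sorted_nth_leq (rcons s0 z) i (size s0) Hsb (ltnW hi).
  by rewrite !nth_rcons hi ltnn eqxx size_rcons; apply; rewrite ltnSn.
- by apply: row_neq_nil_lt; rewrite Es; case: (s0).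
by rewrite /revins Hz Es size_rcons succnK -cats1 take_size_cat.
Qed.

Lemma revins_lands T a b S k r0 : is_skew T -> is_ssyt T ->
  outside_corner T (a, b) -> revins T (a, b) = (S, k, r0) ->
  [/\ r0 < b, b <= size (tb_rows S),
      forall j, 1 <= j -> j != r0 -> inner S j = inner T j
    & 0 < r0 -> [/\ row S r0 = k :: row T r0, inner S r0 = (inner T r0).-1
                  & 0 < inner T r0]].
Proof.
move=> HT Hs Hc E; have hb : 1 <= b by case: Hc => -[].
have [s0 [z [_ _ Hbs Hz Erev]]] := revins_outside_corner Hs Hc.
set U := set_row T b s0 in Erev.
have HUT j : 1 <= j <= b.-1 -> inner U j = inner T j /\ row U j = row T j.
  by move=> hj; rewrite /U row_set_row; [case: eqP => // ?| |]; lia.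
have hq : is_cell T (a, b.-1.+1) by rewrite prednK //; case: Hc.
have hz : z = entry T (a, b.-1.+1) by rewrite prednK.
rewrite Erev in E; have hn : b.-1 < b.+1 by lia.
have [Hr0 Hsz _ Hinn [Hland _]] := rev_fuel_retrace HT Hs hn HUT hq hz E.
split.
- lia.
- by apply: leq_trans Hsz; rewrite /= size_set_nth; lia.
- by move=> j hj hne; rewrite Hinn.
move=> r0_gt0; have [-> -> ? _] := Hland r0_gt0.
by have [<- <-] := HUT r0 ltac:(lia).
Qed.

Lemma ins_last_row T V b s0 z g : 1 <= b ->
  row T b = rcons s0 z -> all (fun y => y <= z) s0 -> row V b = s0 ->
  (forall j, 1 <= j -> inner V j = inner T j) ->
  (forall j, 1 <= j -> j != b -> row V j = row T j) ->
  teq (ins_fuel g.+1 V b z) T.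
Proof.
move=> hb Hrow Hall HVb Hinn Hrows.
rewrite ins_fuelS /= HVb Hall => j hj.
rewrite inner_set_row row_set_row // Hinn //.
by case: eqP => [->|/eqP hne]; [rewrite Hrow | rewrite Hrows].
Qed.

Lemma ins_after_revins T a b S k r0 V g : is_skew T -> is_ssyt T ->
  outside_corner T (a, b) -> revins T (a, b) = (S, k, r0) -> b <= g ->
  (forall j, 1 <= j -> inner V j = inner T j) ->
  (forall j, 1 <= j -> j != r0 -> row V j = row S j) ->
  (0 < r0 -> row V r0 = row T r0) ->
  teq (ins_fuel g V r0.+1 k) T.
Proof.
move=> HT Hs Hc E hg HVi HVS HVr0; have hb : 1 <= b by case: Hc => -[].
have [s0 [z [Hrow Hall _ Hz Erev]]] := revins_outside_corner Hs Hc.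
set U := set_row T b s0 in Erev.
have HUT j : 1 <= j <= b.-1 -> inner U j = inner T j /\ row U j = row T j.
  by move=> hj; rewrite /U row_set_row; [case: eqP => // ?| |]; lia.
have hq : is_cell T (a, b.-1.+1) by rewrite prednK //; case: Hc.
have hz : z = entry T (a, b.-1.+1) by rewrite prednK.
rewrite Erev in E; have hn : b.-1 < b.+1 by lia.
have [Hr0 _ Hrows _ [_ Hretrace]] := rev_fuel_retrace HT Hs hn HUT hq hz E.
have HVS' j : r0 < j <= b.-1 -> row V j = row S j by move=> hj; apply: HVS; lia.
have [V' [-> [HinV' HrowV']]] := Hretrace V g ltac:(lia) HVS'.
rewrite prednK // -[g - _]prednK; last lia.
have HUb : row U b = s0 by rewrite /U row_set_row // eqxx.
refine (@ins_last_row T V' b s0 z _ hb Hrow Hall _ _ _).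
- rewrite HrowV' //; have -> : (r0 < b) && (b <= b.-1) = false by lia.
  by rewrite HVS ?Hrows ?HUb //; lia.
- by move=> j hj; rewrite -HVi // /inner HinV'.
move=> j hj hne; rewrite HrowV' //; case: ifP => [Hin|Hout].
  by rewrite /U row_set_row // (negbTE hne).
case: (eqVneq j r0) => [Ej|hjr0]; first by subst j; apply: HVr0.
have Hside : (j < r0) || (b.-1 < j).
  by apply/orP; move: Hout hne hjr0 => /negbT Hout /eqP ? /eqP ?; lia.
by rewrite HVS // Hrows // /U row_set_row // (negbTE hne).
Qed.

Lemma revins_ext_ins T a b S k : is_skew T -> is_ssyt T ->
  outside_corner T (a, b) -> revins T (a, b) = (S, k, 0) -> teq (ext_ins S k) T.
Proof.
move=> HT Hs Hc E; have [_ hbS Hinn _] := revins_lands HT Hs Hc E.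
apply: (ins_after_revins HT Hs Hc E) => //; first lia.
by move=> j hj; apply: Hinn; lia.
Qed.

Lemma revins_int_ins T a b S k r0 : is_skew T -> is_ssyt T ->
  outside_corner T (a, b) -> revins T (a, b) = (S, k, r0) -> 0 < r0 ->
  (exists i, inside_corner S (i, r0) /\ entry S (i, r0) = k)
  /\ teq (int_ins S r0 k) T.
Proof.
move=> HT Hs Hc E hr0; have [Hr0 hbS Hinn Hland] := revins_lands HT Hs Hc E.
have [HSr HSi Hpos] := Hland hr0.
split.
  exists (inner T r0); rewrite /inside_corner /is_cell /entry /outer /= HSr HSi /=.
  split; last by rewrite (_ : (inner T r0 - (inner T r0).-1).-1 = 0) //; lia.
  split; [lia | | lia].
  case=> h1; rewrite Hinn; [|lia|apply/eqP; lia].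
  by have := HT r0.-1 h1; rewrite prednK //; lia.
have HVi j : 1 <= j -> inner (remove_first_cell S r0) j = inner T j.
  move=> hj; rewrite inner_remove_first_cell //.
  by case: eqP => [->|/eqP hne]; [rewrite HSi; lia | apply: Hinn].
apply: (ins_after_revins HT Hs Hc E) => //.
- by rewrite /= size_set_nth; lia.
- by move=> j hj /negbTE hne; rewrite row_remove_first_cell // hne.
by move=> _; rewrite row_remove_first_cell // eqxx HSr.
Qed.

Theorem lemma4p7 (T : sktab) (HT : is_skew T) (Hs : is_ssyt T) :
  (* (a) *)
  (forall S : sktab,
     (exists k, 0 < k /\ S = ext_ins T k) \/
     (exists r k, 1 <= r /\ (exists i, inside_corner T (i, r) /\ entry T (i, r) = k)
                  /\ S = int_ins T r k) ->
     exists c, [/\ is_cell S c, ~ is_cell T c,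
                   (forall d, is_cell S d -> ~ is_cell T d -> d = c),
                   outside_corner S c
                 & teq (revins S c).1.1 T])
  /\
  (* (b) *)
  (forall c, outside_corner T c ->
     let S := (revins T c).1.1 in
     let k := (revins T c).1.2 in
     let r := (revins T c).2 in
     if r == 0 then teq (ext_ins S k) T
     else (exists i, inside_corner S (i, r) /\ entry S (i, r) = k)
          /\ teq (int_ins S r k) T).
Proof.
split.
  move=> S [[k [_ ->]] | [r [k [hr [Hcorner ->]]]]].
  - exact: ext_ins_reverts.
  - exact: int_ins_reverts.
case=> a b Hc; case E: (revins T (a, b)) => [[S k] r] /=.
case: eqP => [r_eq0 | /eqP r_neq0]; first by subst r; exact: (revins_ext_ins HT Hs Hc E).
by apply: (revins_int_ins HT Hs Hc E); rewrite lt0n.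
Qed.
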